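(* Let $\mathcal{U}=\{\bm{x}_1,\dots,\bm{x}_{n_u}\}\subset\mathbb{R}^d$ be a finite set of unlabeled samples, and let $g_{\bm\theta}:\mathbb{R}^d\to\mathbb{R}^{m}\setminus\{0\}$ be a network with parameters $\bm\theta$, with normalized embedding $\tilde g(\bm x)=g_{\bm\theta}(\bm x)/\|g_{\bm\theta}(\bm x)\|_2$. Let $\mathcal{U}=\mathcal{S}_0\cup\mathcal{S}_1$ be a fixed partition (not depending on $\bm\theta$) into nonempty sets, where $\mathcal{S}_c$ is the set of samples whose classifier-predicted label is $\tilde y=c$, and let $\bm\nu_c=\frac{1}{|\mathcal{S}_c|}\sum_{\bm x\in\mathcal{S}_c}\tilde g(\bm x)$ and $\tilde{\bm\nu}_c=\bm\nu_c/\|\bm\nu_c\|$ (assumed $\bm\nu_c\neq 0$). Define the clustering objective $$\mathcal{R}(\bm\theta)=\frac{2}{n_u}\sum_{c\in\{0,1\}}\sum_{\bm x\in\mathcal{S}_c}\|\tilde g(\bm x)-\bm\nu_c\|^2$$ and the (pseudo-label complete-data) log-likelihood $$\ell(\bm\theta)=\sum_{\bm x\in\mathcal{U}}\sum_{y\in\{0,1\}}\mathbb{1}(\tilde y=y)\log p(\bm x,y\mid\bm\theta).$$ Assume each class-conditional distribution in representation space is a von Mises–Fisher distribution, $p(\bm x\mid y=c,\bm\theta)=c_d(\kappa)\,e^{\kappa\tilde{\bm\nu}_c^\top\tilde g(\bm x)}$ with fixed concentration parameter $\kappa>0$ and normalization constant $c_d(\kappa)$, and that the class prior is uniform, $p(y=0)=p(y=1)=1/2$.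 Then minimizing $\mathcal{R}(\bm\theta)$ over $\bm\theta$ is equivalent to maximizing $$L_1=\sum_{c\in\{0,1\}}\frac{|\mathcal{S}_c|}{n_u}\|\bm\nu_c\|^2,$$ maximizing $\ell(\bm\theta)$ over $\bm\theta$ is equivalent to maximizing $$L_2=\sum_{c\in\{0,1\}}\frac{|\mathcal{S}_c|}{n_u}\|\bm\nu_c\|,$$ and $L_1\le L_2$.
   Context: Here ''equivalent'' means the two objectives have the same set of optimizers over $\bm\theta$ (they differ by a strictly monotone transformation not depending on $\bm\theta$). The setting is positive-unlabeled learning: the labels of unlabeled samples are replaced by pseudo-labels $\tilde y=\arg\max_c f_c(\bm x)$ from a classifier $f$, and the latent class variable's posterior is taken to be the indicator $\mathbb{1}(\tilde y=y)$. *)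

From HB Require Import structures.
From mathcomp Require Import all_boot all_order all_algebra.
From mathcomp Require Import reals sequences exp.
Set Implicit Arguments. Unset Strict Implicit. Unset Printing Implicit Defensive.
Import Order.TTheory GRing.Theory Num.Theory.
Local Open Scope ring_scope.

Section PU.
Variable R : realType.

Definition dotv (m : nat) (u v : 'rV[R]_m) : R := \sum_(j < m) u 0 j * v 0 j.
Definition vnorm (m : nat) (v : 'rV[R]_m) : R := Num.sqrt (\sum_(j < m) v 0 j ^+ 2).
Definition normalize (m : nat) (v : 'rV[R]_m) : 'rV[R]_m := (vnorm v)^-1 *: v.

Variables (d m n : nat) (Theta : Type).
Variable (x : 'I_n -> 'rV[R]_d).
Variable (g : Theta -> 'rV[R]_d -> 'rV[R]_m).
Variable (ylab : 'rV[R]_d -> bool).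

Definition gt (th : Theta) (v : 'rV[R]_d) : 'rV[R]_m := normalize (g th v).

Definition Sc (c : bool) : {set 'I_n} := [set i | ylab (x i) == c].

Definition nuc (th : Theta) (c : bool) : 'rV[R]_m :=
  (#|Sc c|%:R)^-1 *: \sum_(i in Sc c) gt th (x i).

Definition Robj (th : Theta) : R :=
  2 / n%:R * \sum_(c : bool) \sum_(i in Sc c) vnorm (gt th (x i) - nuc th c) ^+ 2.

Definition loglik (p : Theta -> 'rV[R]_d -> bool -> R) (th : Theta) : R :=
  \sum_(i < n) \sum_(y : bool) (ylab (x i) == y)%:R * ln (p th (x i) y).

Definition L1 (th : Theta) : R :=
  \sum_(c : bool) #|Sc c|%:R / n%:R * vnorm (nuc th c) ^+ 2.
Definition L2 (th : Theta) : R :=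
  \sum_(c : bool) #|Sc c|%:R / n%:R * vnorm (nuc th c).

End PU.

(* "Minimizing f is equivalent to maximizing h": same set of optimizers. *)
Definition min_equiv_max (R : realType) (T : Type) (f h : T -> R) : Prop :=
  forall th, (forall th', f th <= f th') <-> (forall th', h th' <= h th).
Definition max_equiv_max (R : realType) (T : Type) (f h : T -> R) : Prop :=
  forall th, (forall th', f th' <= f th) <-> (forall th', h th' <= h th).

From HB Require Import structures.
From mathcomp Require Import all_boot all_order all_algebra.
From mathcomp Require Import reals sequences exp.
From mathcomp Require Import ring.
Import Order.TTheory GRing.Theory Num.Theory.
Local Open Scope ring_scope.
Set Implicit Arguments. Unset Strict Implicit.

(** Since every embedding has unit norm, the within-class squared deviations
    sum to [|S_c| (1 - |nu_c|^2)], so [R = 2 - 2 L1]. Under the vMF model the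
    pseudo-label log-likelihood of a sample of class [c] is a constant plus
    [kappa <nu~_c, g~(x)>], and summing over [S_c] gives [|S_c| |nu_c|], so
    [loglik] is a constant plus [kappa n L2]. Optimizers are unchanged by such
    affine maps with nonzero slope. Finally a mean of unit vectors has norm at
    most [1] (its deviations sum to a nonnegative number), and [t^2 <= t] on
    [[0, 1]]. *)

Section InnerProduct.
Variables (R : realType) (m : nat).
Implicit Types (u v w : 'rV[R]_m) (a : R).

Lemma dotvC u v : dotv u v = dotv v u.
Proof. by apply: eq_bigr => j _; rewrite mulrC. Qed.

Lemma dotvDl u v w : dotv (u + v) w = dotv u w + dotv v w.
Proof. by rewrite /dotv -big_split; apply: eq_bigr => j _; rewrite mxE mulrDl. Qed.

Lemma dotvZl a u w : dotv (a *: u) w = a * dotv u w.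
Proof. by rewrite /dotv mulr_sumr; apply: eq_bigr => j _; rewrite mxE mulrA. Qed.

Lemma dotvNl u w : dotv (- u) w = - dotv u w.
Proof. by rewrite -scaleN1r dotvZl mulN1r. Qed.

Lemma dotvBl u v w : dotv (u - v) w = dotv u w - dotv v w.
Proof. by rewrite dotvDl dotvNl. Qed.

Lemma dotvBr u v w : dotv w (u - v) = dotv w u - dotv w v.
Proof. by rewrite !(dotvC w) dotvBl. Qed.

Lemma dotv0l w : dotv 0 w = 0.
Proof. by rewrite -(scale0r 0) dotvZl mul0r. Qed.

Lemma dotv_suml (I : finType) (P : pred I) (F : I -> 'rV[R]_m) w :
  dotv (\sum_(i | P i) F i) w = \sum_(i | P i) dotv (F i) w.
Proof. by apply: (big_morph (fun u => dotv u w)) => [u v|]; [exact: dotvDl | exact: dotv0l]. Qed.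

Lemma vnorm_ge0 v : 0 <= vnorm v.
Proof. exact: sqrtr_ge0. Qed.

Lemma vnorm_sqr v : vnorm v ^+ 2 = dotv v v.
Proof.
rewrite sqr_sqrtr; last by apply: sumr_ge0 => j _; rewrite sqr_ge0.
by apply: eq_bigr => j _; rewrite expr2.
Qed.

Lemma vnorm_eq0 v : (vnorm v == 0) = (v == 0).
Proof.
apply/idP/eqP => [|->]; last by rewrite -sqrf_eq0 vnorm_sqr dotv0l.
rewrite -sqrf_eq0 vnorm_sqr => /eqP /psumr_eq0P v0.
apply/rowP => j; rewrite mxE; apply/eqP; rewrite -sqrf_eq0 expr2.
by apply/eqP/v0 => // k _; rewrite -expr2 sqr_ge0.
Qed.

Lemma dotv_normalizel v w : dotv (normalize v) w = (vnorm v)^-1 * dotv v w.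
Proof. exact: dotvZl. Qed.

Lemma dotv_normalize_self v : dotv (normalize v) v = vnorm v.
Proof.
rewrite dotv_normalizel -vnorm_sqr.
have [->|nv0] := eqVneq (vnorm v) 0; first by rewrite invr0 mul0r.
by rewrite expr2 mulKf.
Qed.

Lemma normalize_unit v : v != 0 -> dotv (normalize v) (normalize v) = 1.
Proof.
rewrite -vnorm_eq0 => nv0.
by rewrite dotv_normalizel dotvC dotv_normalizel -vnorm_sqr; field.
Qed.

End InnerProduct.

Section Mean.
Variables (R : realType) (m : nat) (I : finType).
Implicit Types (A : {set I}) (G : I -> 'rV[R]_m).

Definition vmean A G : 'rV[R]_m := (#|A|%:R)^-1 *: \sum_(i in A) G i.

Lemma sum_vmean A G : (0 < #|A|)%N -> \sum_(i in A) G i = #|A|%:R *: vmean A G.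
Proof. by move=> A0; rewrite scalerA divff ?scale1r // pnatr_eq0 -lt0n. Qed.

Lemma sum_sqr_dev_vmean A G : (0 < #|A|)%N ->
  \sum_(i in A) vnorm (G i - vmean A G) ^+ 2
    = \sum_(i in A) vnorm (G i) ^+ 2 - #|A|%:R * vnorm (vmean A G) ^+ 2.
Proof.
move=> A0; set nu := vmean A G.
have dev i : vnorm (G i - nu) ^+ 2 = vnorm (G i) ^+ 2 - 2 * dotv (G i) nu + dotv nu nu.
  by rewrite !vnorm_sqr dotvBl !dotvBr (dotvC nu); ring.
rewrite (eq_bigr _ (fun i _ => dev i)) !big_split /= sumrN -mulr_sumr -dotv_suml.
by rewrite sum_vmean // dotvZl sumr_const vnorm_sqr; ring.
Qed.

Lemma sum_sqr_dev_vmean_unit A G : (0 < #|A|)%N ->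
  {in A, forall i, vnorm (G i) = 1} ->
  \sum_(i in A) vnorm (G i - vmean A G) ^+ 2 = #|A|%:R * (1 - vnorm (vmean A G) ^+ 2).
Proof.
move=> A0 G1; rewrite sum_sqr_dev_vmean // (eq_bigr (fun=> 1)); last first.
  by move=> i /G1 ->; rewrite expr1n.
by rewrite sumr_const; ring.
Qed.

Lemma vnorm_vmean_le1 A G : (0 < #|A|)%N ->
  {in A, forall i, vnorm (G i) = 1} -> vnorm (vmean A G) <= 1.
Proof.
move=> A0 G1; have A0R : (0 : R) < #|A|%:R by rewrite ltr0n.
have : 0 <= #|A|%:R * (1 - vnorm (vmean A G) ^+ 2).
  by rewrite -sum_sqr_dev_vmean_unit //; apply: sumr_ge0 => i _; rewrite sqr_ge0.
by rewrite pmulr_rge0 // subr_ge0 expr_le1 ?vnorm_ge0.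
Qed.

Lemma sum_dotv_normalize_vmean A G : (0 < #|A|)%N ->
  \sum_(i in A) dotv (normalize (vmean A G)) (G i) = #|A|%:R * vnorm (vmean A G).
Proof.
move=> A0; under eq_bigr do rewrite dotvC.
by rewrite -dotv_suml sum_vmean // dotvZl dotvC dotv_normalize_self.
Qed.

End Mean.

Section AffineOptimizers.
Variables (R : realType) (T : Type) (f h : T -> R) (a b : R).
Hypothesis b_gt0 : 0 < b.

Lemma min_equiv_max_affine : (forall t, f t = a - b * h t) -> min_equiv_max f h.
Proof.
move=> fE t; split=> opt t'; move: (opt t'); rewrite !fE.
  by rewrite lerD2l lerN2 ler_pM2l.
by rewrite lerD2l lerN2 ler_pM2l.
Qed.

Lemma max_equiv_max_affine : (forall t, f t = a + b * h t) -> max_equiv_max f h.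
Proof.
by move=> fE t; split=> opt t'; move: (opt t'); rewrite !fE lerD2l ler_pM2l.
Qed.

End AffineOptimizers.

Lemma sum_indicator (R : realType) (T : finType) (b : T) (F : T -> R) :
  \sum_(y : T) (b == y)%:R * F y = F b.
Proof.
rewrite (eq_bigr (fun y => if y == b then F y else 0)) -?big_mkcond ?big_pred1_eq //.
by move=> y _; rewrite eq_sym; case: eqP; rewrite ?mul1r ?mul0r.
Qed.

Section PseudoLabels.
Variables (R : realType) (d m n : nat) (Theta : Type).
Variables (x : 'I_n -> 'rV[R]_d) (g : Theta -> 'rV[R]_d -> 'rV[R]_m).
Variable ylab : 'rV[R]_d -> bool.
Hypothesis g_neq0 : forall th v, g th v != 0.
Hypothesis Sc_nonempty : forall c : bool, exists i : 'I_n, ylab (x i) = c.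

Local Notation Sc := (Sc x ylab).
Local Notation nuc := (nuc x g ylab).

Lemma nucE th c : nuc th c = vmean (Sc c) (fun i => gt g th (x i)).
Proof. by []. Qed.

Lemma vnorm_gt th v : vnorm (gt g th v) = 1.
Proof.
by rewrite -[LHS]ger0_norm ?vnorm_ge0 // -sqrtr_sqr vnorm_sqr normalize_unit // sqrtr1.
Qed.

Lemma card_Sc_gt0 c : (0 < #|Sc c|)%N.
Proof. by have [i ic] := Sc_nonempty c; apply/card_gt0P; exists i; rewrite inE ic. Qed.

Lemma n_gt0 : (0 < n)%N.
Proof. by have [i _] := Sc_nonempty true; exact: leq_ltn_trans (ltn_ord i). Qed.

Lemma sum_Sc (F : bool -> 'I_n -> R) :
  \sum_(c : bool) \sum_(i in Sc c) F c i = \sum_(i < n) F (ylab (x i)) i.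
Proof.
rewrite big_bool /= [RHS](bigID (fun i => ylab (x i))) /=.
by congr (_ + _); apply: eq_big => i; rewrite inE; case: (ylab (x i)).
Qed.

Lemma sum_card_Sc : \sum_(c : bool) (#|Sc c|%:R : R) = n%:R.
Proof.
rewrite -[n in RHS]card_ord -sumr_const -(sum_Sc (fun _ _ => 1)).
by apply: eq_bigr => c _; rewrite sumr_const.
Qed.

Lemma Robj_L1 th : Robj x g ylab th = 2 - 2 * L1 x g ylab th.
Proof.
have nR : (n%:R : R) != 0 by rewrite pnatr_eq0 -lt0n n_gt0.
have dev c : \sum_(i in Sc c) vnorm (gt g th (x i) - nuc th c) ^+ 2
    = #|Sc c|%:R * (1 - vnorm (nuc th c) ^+ 2).
  by rewrite nucE sum_sqr_dev_vmean_unit ?card_Sc_gt0 // => i _; rewrite vnorm_gt.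
rewrite /Robj /L1 (eq_bigr _ (fun c _ => dev c)).
under eq_bigr do rewrite mulrBr mulr1.
under [X in _ = _ - 2 * X]eq_bigr do rewrite mulrAC.
by rewrite sumrB sum_card_Sc -mulr_suml; field.
Qed.

Lemma loglik_L2 (kappa cd : R) (p : Theta -> 'rV[R]_d -> bool -> R) :
  0 < cd ->
  (forall th v c, p th v c =
     2^-1 * (cd * expR (kappa * dotv (normalize (nuc th c)) (gt g th v)))) ->
  forall th, loglik x ylab p th = n%:R * ln (2^-1 * cd) + kappa * n%:R * L2 x g ylab th.
Proof.
move=> cd_gt0 pE th; have nR : (n%:R : R) != 0 by rewrite pnatr_eq0 -lt0n n_gt0.
have lnp i : ln (p th (x i) (ylab (x i)))
    = ln (2^-1 * cd) + kappa * dotv (normalize (nuc th (ylab (x i)))) (gt g th (x i)).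
  by rewrite pE mulrA lnM ?expRK // posrE ?expR_gt0 ?mulr_gt0 ?invr_gt0.
rewrite /loglik; under eq_bigr do rewrite sum_indicator lnp.
rewrite big_split /= sumr_const card_ord -mulr_sumr.
rewrite -(sum_Sc (fun c i => dotv (normalize (nuc th c)) (gt g th (x i)))).
under eq_bigr do rewrite nucE sum_dotv_normalize_vmean ?card_Sc_gt0 // -nucE.
rewrite /L2 -mulrA; congr (_ + _ * _); first by rewrite mulr_natl.
by rewrite mulr_sumr; apply: eq_bigr => c _; field.
Qed.

Lemma L1_le_L2 th : L1 x g ylab th <= L2 x g ylab th.
Proof.
apply: ler_sum => c _; apply: ler_wpM2l; first by rewrite divr_ge0.
rewrite expr2 ler_piMl ?vnorm_ge0 // nucE vnorm_vmean_le1 ?card_Sc_gt0 //.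
by move=> i _; rewrite vnorm_gt.
Qed.

End PseudoLabels.

Unset Implicit Arguments. Set Strict Implicit.

Theorem theorem1 (R : realType) (d m n : nat) (Theta : Type)
  (x : 'I_n -> 'rV[R]_d) (hx : injective x)
  (g : Theta -> 'rV[R]_d -> 'rV[R]_m) (hg : forall th v, g th v != 0)
  (ylab : 'rV[R]_d -> bool)
  (hS : forall c : bool, exists i : 'I_n, ylab (x i) = c)
  (hnu : forall th (c : bool), nuc x g ylab th c != 0)
  (kappa cd : R) (hkappa : 0 < kappa) (hcd : 0 < cd)
  (p : Theta -> 'rV[R]_d -> bool -> R)
  (hp : forall th v (c : bool),
      p th v c = 2^-1 * (cd * expR (kappa *
                   dotv (normalize (nuc x g ylab th c)) (gt g th v)))) :
  min_equiv_max (Robj x g ylab) (L1 x g ylab) /\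
  max_equiv_max (loglik x ylab p) (L2 x g ylab) /\
  (forall th, L1 x g ylab th <= L2 x g ylab th).
Proof.
have n_gt0R : (0 : R) < n%:R by rewrite ltr0n (n_gt0 hS).
split; first exact: (min_equiv_max_affine (a := 2)) (Robj_L1 hg hS).
split; last exact: L1_le_L2 hg hS.
apply: (max_equiv_max_affine (b := kappa * n%:R)); first exact: mulr_gt0.
exact: (loglik_L2 hS hcd hp).
Qed.
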